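(* Let $F$ be a graph of diameter $2$, $n=|V(F)|$, $t=\delta(F)$, and let $l>n$ be an integer. If $C_{l-2}^{n-2}>n!\,C_{l-2}^{n-t-2}$, then $0<\delta_l<z_{i+1}-z_i$ for every $i\in\{t+1,t+2,\dots,l-1\}$.
   Context: All graphs are simple, finite, undirected. The $F$-degree of a vertex $v$ in $G$ is the number of subgraphs of $G$ (not necessarily induced) isomorphic to $F$ and containing $v$. $A_{2l-1}$ is the graph with vertex set $\{1,\dots,2l-1\}$ in which distinct $i,j$ are adjacent iff $|i-j|\le l-1$; $F_{2l}$ is obtained from $A_{2l-1}$ by adding a new vertex $2l$ joined exactly to $1,\dots,t$. $z_i$ is the $F$-degree of $i$ in $A_{2l-1}$, $f_i$ the $F$-degree of $i$ in $F_{2l}$, and $\delta_i=f_i-z_i$. $C_m^k=\frac{m!}{k!(m-k)!}$ for integers $m\ge k\ge 0$, and $C_m^k=0$ otherwise. *)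

From mathcomp Require Import all_boot all_order all_algebra.
Set Implicit Arguments. Unset Strict Implicit. Unset Printing Implicit Defensive.
Import GRing.Theory Num.Theory.

(* A simple graph is a symmetric irreflexive relation [e] on a finite type. *)

(* [is_copy e eF W Es]: the subgraph (W, Es) of the graph (T, e) -- W a vertex
   set, Es a set of edges of e (as 2-element vertex sets) with ends in W --
   is isomorphic to the graph F = ('I_n, eF). *)
Definition is_copy (T : finType) (e : rel T) (n : nat) (eF : rel 'I_n)
    (W : {set T}) (Es : {set {set T}}) : bool :=
  [forall E in Es, exists x, exists y,
      [&& x \in W, y \in W, e x y & E == [set x; y]]] &&
  [exists f : {ffun 'I_n -> T},
      [&& injectiveb f, f @: setT == W &
          [forall x, forall y, eF x y == ([set f x; f y] \in Es)]]].

Definition Fdeg (T : finType) (e : rel T) (n : nat) (eF : rel 'I_n) (v : T) : nat :=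
  #|[set p : {set T} * {set {set T}} | is_copy e eF p.1 p.2 && (v \in p.1)]|.

(* Vertex k (0-based) of the ordinal types below represents vertex k+1 of the paper. *)

Definition Arel (l : nat) : rel 'I_(l.*2.-1) :=
  fun i j => [&& i != j, (i <= j + (l - 1))%N & (j <= i + (l - 1))%N].

(* F_{2l}: A_{2l-1} plus vertex 2l joined exactly to 1..t. *)
Definition Frel (l t : nat) : rel 'I_(l.*2) :=
  fun i j => (i != j) &&
    (if ((i < l.*2.-1) && (j < l.*2.-1))%N
     then ((i <= j + (l - 1)) && (j <= i + (l - 1)))%N
     else if (i == l.*2.-1 :> nat) then (j < t)%N else (i < t)%N).

(* z_i = F-degree of vertex i (1-based) in A_{2l-1} (the sum has exactly one
   term when 1 <= i <= 2l-1). *)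
Definition zdeg (n : nat) (eF : rel 'I_n) (l i : nat) : nat :=
  \sum_(v : 'I_(l.*2.-1) | val v == i.-1) Fdeg (@Arel l) eF v.

Definition fdeg (n : nat) (eF : rel 'I_n) (l t i : nat) : nat :=
  \sum_(v : 'I_(l.*2) | val v == i.-1) Fdeg (@Frel l t) eF v.

Definition ddeg (n : nat) (eF : rel 'I_n) (l t i : nat) : int :=
  (fdeg eF l t i)%:Z - (zdeg eF l i)%:Z.

Definition Cb (m k : int) : nat :=
  if ((0 <= k) && (k <= m))%R then 'C(`|m|%N, `|k|%N) else 0%N.

Definition degree (n : nat) (eF : rel 'I_n) (x : 'I_n) : nat := #|[set y | eF x y]|.

Definition is_min_degree (n : nat) (eF : rel 'I_n) (t : nat) : Prop :=
  (exists x, degree eF x = t) /\ (forall x, (t <= degree eF x)%N).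

Definition diameter2 (n : nat) (eF : rel 'I_n) : Prop :=
  (exists x y, x != y /\ ~~ eF x y) /\
  (forall x y, x != y -> ~~ eF x y -> exists w, eF x w && eF w y).

(* Increments of z: for 1 <= i <= l-1 every neighbour of i in A_{2l-1} other than i+1
   is a neighbour of i+1, so the transposition (i i+1) maps the copies at i avoiding
   i+1 injectively to copies at i+1 avoiding i, none of which uses the edge {i+1, i+l}.
   The l-clique {i+1, ..., i+l} carries C(l-2, n-2) further copies through that edge,
   hence z_{i+1} - z_i >= C(l-2, n-2).

   The gap delta_l: it counts the copies of F in F_{2l} through l and the apex 2l.
   One exists (a vertex of minimum degree on the apex, the rest in the clique
   {1, ..., l}).  Conversely the preimage of the apex has at least t neighbours, which
   fill N(2l) = {1, ..., t}, and by diameter 2 the copy lies in {1, ..., t+l-1, 2l}, so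
   choosing the other n-t-2 vertices among l-2 and a labelling gives
   delta_l <= n! C(l-2, n-t-2) < C(l-2, n-2). *)

From mathcomp Require Import all_boot all_algebra perm.
From mathcomp Require Import zify.
Import GRing.Theory.
Set Implicit Arguments. Unset Strict Implicit. Unset Printing Implicit Defensive.

Lemma leq_card_bigcup (I T : finType) (P : pred I) (F : I -> {set T}) :
  (#|\bigcup_(i | P i) F i| <= \sum_(i | P i) #|F i|)%N.
Proof.
elim/big_rec2: _ => [|i A k _ IH]; first by rewrite cards0.
by rewrite cardsU (leq_trans (leq_subr _ _)) // leq_add2l.
Qed.

Lemma cardsU_disjoint (T : finType) (A B : {set T}) :
  [disjoint A & B] -> #|A :|: B| = (#|A| + #|B|)%N.
Proof. by move=> dAB; apply/eqP; rewrite (leq_card_setU A B).2. Qed.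

Lemma card_ord_ltn m k : (k <= m)%N -> #|[set z : 'I_m | (z < k)%N]| = k.
Proof.
move=> km; have widen_inj : injective (widen_ord km) by move=> x y /(congr1 val) xy; apply: val_inj.
rewrite -[k in RHS](card_ord k) -(card_imset _ widen_inj).
congr #|pred_of_set _|; apply/setP=> z; rewrite inE.
apply/idP/imsetP => [zk|[x _ ->]]; last by rewrite /= ltn_ord.
by exists (Ordinal zk) => //; apply: val_inj.
Qed.

Lemma set2_eqP (T : finType) (a b c d : T) : [set a; b] = [set c; d] ->
  (a = c /\ b = d) \/ (a = d /\ b = c).
Proof.
move/setP=> eq_ab_cd.
have /set2P ha : a \in [set c; d] by rewrite -eq_ab_cd set21.
have /set2P hb : b \in [set c; d] by rewrite -eq_ab_cd set22.
have /set2P hc : c \in [set a; b] by rewrite eq_ab_cd set21.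
have /set2P hd : d \in [set a; b] by rewrite eq_ab_cd set22.
by case: ha hb hc hd => -> [] -> [] ha' [] hb'; subst; auto.
Qed.

Section Relabel.
Variables (I T : finType) (A : {set I}) (B : {set T}) (t0 : T).
Hypothesis cardAB : #|A| = #|B|.

Definition relabel (y : I) : T := nth t0 (enum B) (index y (enum A)).

Lemma index_enum_ltn y : y \in A -> (index y (enum A) < size (enum B))%N.
Proof. by move=> Ay; rewrite -cardE -cardAB cardE index_mem mem_enum. Qed.

Lemma relabel_mem y : y \in A -> relabel y \in B.
Proof. by move=> Ay; have := mem_nth t0 (index_enum_ltn Ay); rewrite mem_enum. Qed.

Lemma relabel_inj : {in A &, injective relabel}.
Proof.
move=> x y Ax Ay /eqP; rewrite nth_uniq ?enum_uniq ?index_enum_ltn //.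
by move/eqP/index_inj; apply; rewrite ?mem_enum.
Qed.

Lemma relabel_image : relabel @: A = B.
Proof.
apply/eqP; rewrite eqEcard (card_in_imset relabel_inj) cardAB leqnn andbT.
by apply/subsetP=> _ /imsetP[y Ay ->]; apply: relabel_mem.
Qed.

End Relabel.

Section Copies.
Variables (n : nat) (eF : rel 'I_n).

Definition edges_of (T : finType) (f : 'I_n -> T) : {set {set T}} :=
  [set [set f p.1; f p.2] | p in [set p : 'I_n * 'I_n | eF p.1 p.2]].

Definition copy_of (T : finType) (f : 'I_n -> T) := (f @: setT, edges_of f).

Definition embedding (T : finType) (e : rel T) (f : {ffun 'I_n -> T}) : bool :=
  injectiveb f && [forall x, forall y, eF x y ==> e (f x) (f y)].

Definition copies_at (T : finType) (e : rel T) (v : T) :=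
  [set copy_of f | f : {ffun 'I_n -> T} in [set f | embedding e f & v \in f @: setT]].

Lemma embeddingP (T : finType) (e : rel T) (f : {ffun 'I_n -> T}) :
  reflect (injective f /\ forall x y, eF x y -> e (f x) (f y)) (embedding e f).
Proof.
apply: (iffP andP) => [[/injectiveP f_inj /forallP f_hom]|[f_inj f_hom]].
  by split=> // x y; apply/implyP; move/forallP: (f_hom x).
split; first exact/injectiveP.
by apply/forallP=> x; apply/forallP=> y; apply/implyP; apply: f_hom.
Qed.

Lemma copies_atP (T : finType) (e : rel T) (v : T) p :
  reflect (exists2 f, embedding e f /\ v \in f @: setT & p = copy_of f)
          (p \in copies_at e v).
Proof.
apply: (iffP imsetP) => [[f]|[f [ef vf] ->]]; last by exists f; rewrite ?inE ?ef.
by rewrite inE => /andP[ef vf] ->; exists f.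
Qed.

Lemma eq_copy_of (T : finType) (f g : 'I_n -> T) : f =1 g -> copy_of f = copy_of g.
Proof.
by move=> fg; rewrite /copy_of (eq_imset _ fg); congr pair; apply: eq_imset => p; rewrite !fg.
Qed.

Definition covering (T : finType) (w : T) : {set {set T} * {set {set T}}} :=
  [set p : {set T} * {set {set T}} | w \in p.1].

Definition map_copy (T T' : finType) (h : T -> T') (p : {set T} * {set {set T}}) :=
  (h @: p.1, (fun E : {set T} => h @: E) @: p.2).

Lemma copy_of_comp (T T' : finType) (h : T -> T') (f : 'I_n -> T) :
  copy_of (h \o f) = map_copy h (copy_of f).
Proof.
rewrite /copy_of /map_copy /edges_of /= imset_comp; congr pair.
by rewrite -imset_comp; apply: eq_imset => p /=; rewrite imsetU1 imset_set1.
Qed.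

Lemma map_copy_inj (T T' : finType) (h : T -> T') : injective h -> injective (map_copy h).
Proof.
by move=> h_inj [W1 E1] [W2 E2] [/(imset_inj h_inj) -> /(imset_inj (imset_inj h_inj)) ->].
Qed.

Hypothesis sF : symmetric eF.

Lemma is_copyP (T : finType) (e : rel T) W Es : symmetric e ->
  is_copy e eF W Es <-> exists2 f, embedding e f & (W, Es) = copy_of f.
Proof.
move=> se; split.
- case/andP=> /forall_inP Es_edges /existsP[f /and3P[/injectiveP f_inj /eqP fW /forallP fE]].
  have eFE x y : eF x y = ([set f x; f y] \in Es) by apply/eqP; move/forallP: (fE x).
  exists f.
    apply/embeddingP; split=> // x y xy.
    have /Es_edges/existsP[x' /existsP[y' /and4P[_ _ e_xy' /eqP/set2_eqP]]] :
      [set f x; f y] \in Es by rewrite -eFE.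
    by case=> -[-> ->] //; rewrite se.
  rewrite /copy_of fW; congr pair; apply/setP=> E; apply/idP/imsetP => [EsE|].
    have /existsP[x' /existsP[y' /and4P[]]] := Es_edges E EsE.
    rewrite -fW => /imsetP[x _ ->] /imsetP[y _ ->] _ /eqP E_xy.
    by exists (x, y); rewrite // inE eFE -E_xy.
  by case=> -[x y]; rewrite inE /= eFE => ? ->.
- case=> f /embeddingP[f_inj f_hom] [-> ->]; apply/andP; split.
    apply/forall_inP=> E /imsetP[[x y]]; rewrite inE /= => xy ->.
    apply/existsP; exists (f x); apply/existsP; exists (f y).
    by rewrite !imset_f ?inE ?f_hom ?eqxx.
  apply/existsP; exists f; apply/and3P; split=> //; first exact/injectiveP.
  apply/forallP=> x; apply/forallP=> y; apply/eqP; apply/idP/idP => [xy|].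
    by apply/imsetP; exists (x, y); rewrite ?inE.
  case/imsetP=> -[x' y']; rewrite inE /= => xy' /set2_eqP.
  by case=> -[/f_inj -> /f_inj ->] //; rewrite sF.
Qed.

Lemma Fdeg_copies_at (T : finType) (e : rel T) v : symmetric e ->
  Fdeg e eF v = #|copies_at e v|.
Proof.
move=> se; apply: eq_card => -[W Es]; rewrite inE /=; apply/andP/copies_atP.
  by case=> /(is_copyP _ _ se)[f ef [-> ->]] vf; exists f.
by case=> f [ef vf] [-> ->]; split=> //; apply/(is_copyP _ _ se); exists f.
Qed.

End Copies.

Section Swap.
Variables (n : nat) (eF : rel 'I_n) (T : finType) (e : rel T) (a b : T).
Hypotheses (se : symmetric e) (ie : irreflexive e) (nbhd_ab : forall y, y != b -> e a y -> e b y).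

Section SwapEmbedding.
Variable f : {ffun 'I_n -> T}.
Hypotheses (ef : embedding eF e f) (bf : b \notin f @: setT).
Let g : {ffun 'I_n -> T} := [ffun x => tperm a b (f x)].

Lemma swap_embedding : embedding eF e g.
Proof.
have /embeddingP[f_inj f_hom] := ef.
have fb x : f x != b by apply: contraNneq bf => <-; rewrite imset_f.
apply/embeddingP; split=> [x y|x y xy]; rewrite !ffunE; first by move/perm_inj/f_inj.
have := f_hom x y xy; have [fxa|fxa] := eqVneq (f x) a; have [fya|fya] := eqVneq (f y) a.
- by rewrite fxa fya ie.
- by rewrite fxa tpermL tpermD 1?eq_sym ?fb //; apply: nbhd_ab.
- by rewrite fya tpermL tpermD 1?eq_sym ?fb // ![e _ b]se se; apply: nbhd_ab.
- by rewrite !tpermD // 1?eq_sym ?fb.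
Qed.

Lemma swap_edge y : y != a -> y != b -> [set b; y] \in edges_of eF g -> e a y.
Proof.
have /embeddingP[_ f_hom] := ef.
move=> ya yb /imsetP[[x z]]; rewrite inE !ffunE /= => /f_hom xz.
case/set2_eqP=> -[/(congr1 (tperm a b)) + /(congr1 (tperm a b))];
  rewrite !tpermK tpermR tpermD 1?eq_sym // => fx fz; move: xz;
  by rewrite -fx -fz // se.
Qed.

Lemma map_copy_swap : map_copy (tperm a b) (copy_of eF f) = copy_of eF g.
Proof. by rewrite -copy_of_comp; apply: eq_copy_of => x; rewrite ffunE. Qed.

End SwapEmbedding.

(* The transposition (a b) carries the copies at [a] avoiding [b] injectively to copies
   at [b] avoiding [a], none of which contains the edge {b, b'} since a and b' are not
   adjacent; the copies at [b] in [Y] are thus new. *)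
Lemma card_copies_at_swap (Y : {set {set T} * {set {set T}}}) b' :
  b' != a -> b' != b -> ~~ e a b' -> Y \subset copies_at eF e b ->
  (forall p, p \in Y -> a \notin p.1 /\ [set b; b'] \in p.2) ->
  (#|copies_at eF e a| + #|Y| <= #|copies_at eF e b|)%N.
Proof.
move=> b'a b'b ab' subY Yp; set Sa := copies_at eF e a; set Sb := copies_at eF e b.
set Z := map_copy (tperm a b) @: (Sa :\: Sb).
have Zp p : p \in Z -> [/\ p \in Sb, a \notin p.1 & [set b; b'] \notin p.2].
  case/imsetP=> _ /setDP[/copies_atP[f [ef af] ->] Sbf] ->.
  have bf : b \notin f @: setT by apply: contra Sbf => bf; apply/copies_atP; exists f.
  rewrite map_copy_swap //; split.
  - apply/copies_atP; exists [ffun x => tperm a b (f x)] => //; split.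
      exact: swap_embedding.
    by case/imsetP: af => x _ ->; apply/imsetP; exists x; rewrite ?ffunE ?tpermL.
  - apply/imsetP=> -[x _]; rewrite ffunE => /(congr1 (tperm a b)); rewrite tpermK tpermL.
    by move=> fx; move: bf; rewrite fx imset_f.
  - by apply: contraNN ab'; apply: swap_edge.
have Sa_a p : p \in Sa -> a \in p.1 by case/copies_atP=> f [_ af] ->.
have disj1 : [disjoint Sa :&: Sb & Z].
  rewrite disjoint_subset; apply/subsetP=> p /setIP[/Sa_a ap _]; rewrite inE.
  by apply: contraL ap => /Zp[].
have disj2 : [disjoint (Sa :&: Sb) :|: Z & Y].
  rewrite disjoint_subset; apply/subsetP=> p; rewrite inE.
  by case/orP=> [/setIP[/Sa_a ap _]|/Zp[_ _ /negP bp]]; apply/negP=> /Yp[/negP aY bY].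
have cardZ : #|Z| = #|Sa :\: Sb| by apply: card_imset; apply: map_copy_inj; apply: perm_inj.
rewrite -(cardsID Sb Sa) -cardZ -!cardsU_disjoint //; apply: subset_leq_card.
by rewrite !subUset subsetIr subY andbT; apply/subsetP=> p /Zp[].
Qed.

End Swap.

Section CliqueCopies.
Variables (n : nat) (eF : rel 'I_n) (T : finType) (e : rel T) (K : {set T}).
Hypotheses (sF : symmetric eF) (iF : irreflexive eF) (se : symmetric e).
Hypothesis K_clique : {in K &, forall x y, x != y -> e x y}.

Lemma embedding_into_clique (f : {ffun 'I_n -> T}) x0 :
  injective f -> (forall x, x != x0 -> f x \in K) ->
  (forall y, eF x0 y -> e (f x0) (f y)) -> embedding eF e f.
Proof.
move=> f_inj fK f_x0; apply/embeddingP; split=> // x y.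
have [-> | x0x] := eqVneq x x0; first exact: f_x0.
have [-> xy | x0y xy] := eqVneq y x0; first by rewrite se f_x0 // sF.
by apply: K_clique; rewrite ?fK // (inj_eq f_inj); apply: contraTneq xy => ->; rewrite iF.
Qed.

Variables (b b' : T) (u0 v0 : 'I_n).
Hypotheses (Kb : b \in K) (Kb' : b' \in K) (bb' : b != b') (u0v0 : eF u0 v0).

Definition clique_map (U : {set T}) : {ffun 'I_n -> T} :=
  [ffun y => if y == u0 then b else if y == v0 then b'
             else relabel (~: [set u0; v0]) U b y].

Definition clique_supports := [set U : {set T} | (U \subset K :\: [set b; b']) && (#|U| == n - 2)].

Lemma card_clique_supports : #|clique_supports| = 'C(#|K| - 2, n - 2).
Proof. by rewrite cards_draws cardsDS ?cards2 ?bb' // subUset !sub1set Kb Kb'. Qed.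

Lemma u0_neq_v0 : u0 != v0.
Proof. by apply: contraTneq u0v0 => ->; rewrite iF. Qed.

Section CliqueMap.
Variable U : {set T}.
Hypothesis U_supp : U \in clique_supports.

Lemma clique_map_image : clique_map U @: setT = [set b; b'] :|: U.
Proof.
have := U_supp; rewrite inE => /andP[_ /eqP cardU].
have cardR : #|~: [set u0; v0]| = #|U|.
  by have := cardsC [set u0; v0]; rewrite cards2 u0_neq_v0 card_ord cardU; lia.
rewrite -(setUCr [set u0; v0]) imsetU imsetU1 imset_set1 !ffunE eqxx.
rewrite eq_sym (negbTE u0_neq_v0) eqxx; congr (_ :|: _).
rewrite -[RHS](relabel_image b cardR).
by apply: eq_in_imset => y; rewrite !inE negb_or ffunE => /andP[/negbTE-> /negbTE->].
Qed.

Lemma clique_map_inj : injective (clique_map U).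
Proof.
have := U_supp; rewrite inE => /andP[/subsetP UK /eqP cardU].
have bU : [disjoint [set b; b'] & U].
  by rewrite disjoint_sym disjoint_subset; apply/subsetP=> y /UK; rewrite !inE => /andP[].
have n2 : (2 <= n)%N by have := cardsC [set u0; v0]; rewrite cards2 u0_neq_v0 card_ord; lia.
have /imset_injP f_inj : #|clique_map U @: setT| == #|[set: 'I_n]|.
  by rewrite clique_map_image cardsU_disjoint // cards2 bb' cardU cardsT card_ord; lia.
by move=> x y; apply: f_inj; rewrite inE.
Qed.

Lemma clique_map_embedding : embedding eF e (clique_map U).
Proof.
have fK y : clique_map U y \in K.
  have := U_supp; rewrite inE => /andP[/subsetP UK _].
  have : clique_map U y \in [set b; b'] :|: U by rewrite -clique_map_image imset_f.
  by rewrite !inE -orbA => /or3P[/eqP->|/eqP->|/UK]; rewrite // inE => /andP[].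
apply: (embedding_into_clique (x0 := u0) clique_map_inj (fun y _ => fK y)) => y u0y.
apply: K_clique; rewrite ?fK // (inj_eq clique_map_inj).
by apply: contraTneq u0y => <-; rewrite iF.
Qed.

Lemma clique_map_edge : [set b; b'] \in edges_of eF (clique_map U).
Proof.
apply/imsetP; exists (u0, v0); rewrite ?inE //=.
by rewrite !ffunE eqxx eq_sym (negbTE u0_neq_v0) eqxx.
Qed.

End CliqueMap.

Lemma card_clique_copies :
  ('C(#|K| - 2, n - 2) <=
   #|[set p in copies_at eF e b | (p.1 \subset K) && ([set b; b'] \in p.2)]|)%N.
Proof.
rewrite -card_clique_supports -(card_in_imset (f := fun U => copy_of eF (clique_map U))).
  apply/subset_leq_card/subsetP=> _ /imsetP[U U_supp ->]; rewrite !inE /=.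
  have UK : U \subset K.
    by have := U_supp; rewrite inE => /andP[/subset_trans->] //; apply: subsetDl.
  rewrite clique_map_edge // clique_map_image // !subUset !sub1set Kb Kb' UK !andbT.
  apply/copies_atP; exists (clique_map U) => //; split; first exact: clique_map_embedding.
  by rewrite clique_map_image // !inE eqxx.
move=> U1 U2 U1_supp U2_supp [].
rewrite !clique_map_image // => eqU.
have supp_disj U : U \in clique_supports -> U = ([set b; b'] :|: U) :\: [set b; b'].
  rewrite inE => /andP[UK _]; rewrite setDUl setDv set0U; apply/esym/setDidPl.
  rewrite disjoint_subset; apply: subset_trans UK _.
  by apply/subsetP=> y; rewrite !inE => /andP[].
by rewrite (supp_disj U1) // (supp_disj U2) // eqU.
Qed.

End CliqueCopies.

Section InducedCopies.
Variables (n : nat) (eF : rel 'I_n) (T T' : finType) (e : rel T) (e' : rel T').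
Variables (h : T -> T') (r : T' -> T) (w : T').
Hypotheses (h_rel : forall x y, e' (h x) (h y) = e x y) (hK : cancel h r).
Hypotheses (h_w : forall x, h x != w) (rK : forall y, y != w -> h (r y) = y).

Lemma copies_at_avoid v :
  copies_at eF e' (h v) :\: covering w = map_copy h @: copies_at eF e v.
Proof.
apply/setP=> p; rewrite !inE; apply/andP/imsetP.
  case=> wp /copies_atP[f [/embeddingP[f_inj f_hom] vf] pf].
  have fw x : f x != w by apply: contraNneq wp => <-; rewrite pf imset_f.
  set g := [ffun x => r (f x)].
  have hg x : h (g x) = f x by rewrite ffunE rK.
  exists (copy_of eF g); last by rewrite -copy_of_comp pf (eq_copy_of eF (hg : h \o g =1 f)).
  apply/copies_atP; exists g => //; split.
    apply/embeddingP; split=> [x y /(congr1 h)|x y xy]; first by rewrite !hg => /f_inj.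
    by rewrite -h_rel !hg f_hom.
  by case/imsetP: vf => x _ hv; apply/imsetP; exists x; rewrite // ffunE -hv hK.
case=> _ /copies_atP[f [/embeddingP[f_inj f_hom] vf] ->] ->.
have hf : h \o f =1 [ffun x => h (f x)] by move=> x; rewrite ffunE.
rewrite -copy_of_comp (eq_copy_of eF hf); split.
  by apply/imsetP=> -[x _]; rewrite ffunE => /eqP; rewrite eq_sym (negbTE (h_w _)).
apply/copies_atP; exists [ffun x => h (f x)] => //; split.
  apply/embeddingP; split=> [x y|x y xy]; rewrite !ffunE; last by rewrite h_rel f_hom.
  by move/(can_inj hK)/f_inj.
by case/imsetP: vf => x _ ->; apply/imsetP; exists x; rewrite ?ffunE.
Qed.

Lemma card_copies_at_split v :
  #|copies_at eF e' (h v)| =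
  (#|copies_at eF e v| + #|copies_at eF e' (h v) :&: covering w|)%N.
Proof.
rewrite -(cardsID (covering w) (copies_at eF e' (h v))).
by rewrite copies_at_avoid (card_imset _ (map_copy_inj (can_inj hK))) addnC.
Qed.

End InducedCopies.

Lemma card_inj_ffuns_between (I T : finType) (D C : {set T}) k :
  [disjoint D & C] -> (#|D| + k)%N = #|I| ->
  (#|[set f : {ffun I -> T} | [&& injectiveb f, D \subset f @: setT
                                & f @: setT \subset D :|: C]]| <= #|I|`! * 'C(#|C|, k))%N.
Proof.
move=> DC cardI.
pose draws := [set U : {set T} | (U \subset C) && (#|U| == k)].
apply: (@leq_trans #|\bigcup_(U in draws) [set f in ffun_on (mem (D :|: U)) | injectiveb f]|).
  apply/subset_leq_card/subsetP=> f; rewrite inE => /and3P[f_inj Df fDC].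
  apply/bigcupP; exists (f @: setT :\: D).
    rewrite inE; apply/andP; split.
      by apply/subsetP=> y /setDP[/(subsetP fDC)]; rewrite inE => /orP[->|].
    rewrite cardsDS // card_imset ?cardsT; last exact/injectiveP.
    by apply/eqP; lia.
  rewrite inE f_inj andbT; apply/ffun_onP=> x.
  by rewrite !inE imset_f // andbT orbN.
apply: leq_trans (leq_card_bigcup _ _) _.
rewrite (eq_bigr (fun _ => #|I|`!)); first by rewrite sum_nat_const cards_draws mulnC.
move=> U; rewrite inE => /andP[UC /eqP cardU].
by rewrite card_inj_ffuns_on cardsU_disjoint ?cardU ?cardI ?ffactnn // (disjointWr UC DC).
Qed.

Section EmbeddingNeighbourhoods.
Variables (n : nat) (eF : rel 'I_n) (T : finType) (e : rel T) (f : {ffun 'I_n -> T}).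
Hypothesis ef : embedding eF e f.

Lemma embedding_image_ball2 x : diameter2 eF ->
  f @: setT \subset f x |: [set z | e (f x) z || [exists u, e (f x) u && e u z]].
Proof.
have /embeddingP[_ f_hom] := ef.
move=> [_ common_nbr]; apply/subsetP=> _ /imsetP[y _ ->]; rewrite !inE.
have [<- | xy] := eqVneq x y; first by rewrite eqxx.
have [/f_hom -> | nxy] := boolP (eF x y); first by rewrite orbT.
have [u /andP[xu uy]] := common_nbr x y xy nxy.
by apply/orP; right; apply/orP; right; apply/existsP; exists (f u); rewrite !f_hom.
Qed.

Lemma embedding_neighbors x : (#|[set z | e (f x) z]| <= degree eF x)%N ->
  [set z | e (f x) z] \subset f @: setT.
Proof.
have /embeddingP[f_inj f_hom] := ef.
move=> deg_fx; have sub : f @: [set y | eF x y] \subset [set z | e (f x) z].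
  by apply/subsetP=> _ /imsetP[y + ->]; rewrite !inE; apply: f_hom.
suff <- : f @: [set y | eF x y] = [set z | e (f x) z] by apply/imsetS/subsetT.
by apply/eqP; rewrite eqEcard sub card_imset.
Qed.

End EmbeddingNeighbourhoods.

Section PathPower.
Variable l : nat.
Local Notation T := 'I_(l.*2.-1).

Lemma Arel_sym : symmetric (@Arel l).
Proof. by move=> x y; rewrite /Arel eq_sym; congr (_ && _); apply: andbC. Qed.

Lemma Arel_irr : irreflexive (@Arel l).
Proof. by move=> x; rewrite /Arel eqxx. Qed.

Lemma Arel_window_clique b :
  {in [set z : T | b <= z < b + l]%N &, forall x y, x != y -> Arel x y}.
Proof.
move=> x y; rewrite !inE /Arel => /andP[bx xl] /andP[b_y yl] xy.
have : val x != val y by []; lia.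
Qed.

Lemma card_window b : (b < l)%N -> #|[set z : T | b <= z < b + l]%N| = l.
Proof.
move=> bl; have -> : [set z : T | b <= z < b + l]%N =
    [set z : T | z < b + l]%N :\: [set z : T | z < b]%N.
  by apply/setP=> z; rewrite !inE -leqNgt andbC.
rewrite cardsDS; last by apply/subsetP=> z; rewrite !inE; lia.
by rewrite !card_ord_ltn; lia.
Qed.

(* Paper vertices i and i+1 are [a] and [b]; the window [b, b'] = {i+1, ..., i+l} is
   an l-clique avoiding i, and i is not adjacent to i+l. *)
Lemma zdeg_increment n (eF : rel 'I_n) (u0 v0 : 'I_n) i :
  symmetric eF -> irreflexive eF -> eF u0 v0 -> (1 <= i <= l - 1)%N ->
  (zdeg eF l i + 'C(l - 2, n - 2) <= zdeg eF l i.+1)%N.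
Proof.
move=> sF iF u0v0 hi.
have ha : (i.-1 < l.*2.-1)%N by lia.
have hb : (i < l.*2.-1)%N by lia.
have hb' : (i + (l - 1) < l.*2.-1)%N by lia.
pose a := Ordinal ha; pose b := Ordinal hb; pose b' := Ordinal hb'.
rewrite /zdeg (big_pred1 a) => [|v]; last by rewrite /= -val_eqE.
rewrite (big_pred1 b) => [|v]; last by rewrite /= -val_eqE.
rewrite !(Fdeg_copies_at sF _ Arel_sym).
set K := [set z : T | i <= z < i + l]%N.
have Kb : b \in K by rewrite inE /=; lia.
have Kb' : b' \in K by rewrite inE /=; lia.
have bb' : b != b' by rewrite -val_eqE /=; lia.
have := card_clique_copies sF iF Arel_sym (@Arel_window_clique i) Kb Kb' bb' u0v0.
rewrite card_window; last by lia.
set Y := [set p in _ | _] => cardY.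
apply: leq_trans (leq_add (leqnn _) cardY) _.
apply: (card_copies_at_swap Arel_sym Arel_irr _ (b' := b')).
- by move=> y; rewrite /Arel -!val_eqE /=; lia.
- by rewrite -val_eqE /=; lia.
- by rewrite eq_sym.
- by rewrite /Arel /=; lia.
- by apply/subsetP=> p; rewrite inE => /andP[].
move=> p; rewrite inE => /and3P[_ /subsetP pK ->]; split=> //.
by apply/negP=> /pK; rewrite inE /=; lia.
Qed.

End PathPower.

Section PathPowerWithApex.
Variables (l t : nat).
Local Notation T := 'I_(l.*2.-1).
Local Notation T' := 'I_(l.*2).
Local Notation Fr := (@Frel l t).

Lemma Frel_sym : symmetric Fr.
Proof.
move=> x y; rewrite /Frel eq_sym; have [// | yx /=] := eqVneq y x.
have := ltn_ord x; have := ltn_ord y; have : x != y :> nat by rewrite eq_sym.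
case hx: (x < l.*2.-1)%N; case hy: (y < l.*2.-1)%N => /= xy y2l x2l.
- by rewrite andbC.
- have -> : (x == l.*2.-1 :> nat) = false by lia.
  by have -> : (y == l.*2.-1 :> nat) = true by lia.
- have -> : (x == l.*2.-1 :> nat) = true by lia.
  by have -> : (y == l.*2.-1 :> nat) = false by lia.
- lia.
Qed.

Lemma Frel_irr : irreflexive Fr.
Proof. by move=> x; rewrite /Frel eqxx. Qed.

Lemma Frel_low_clique : {in [set z : T' | z < l]%N &, forall x y, x != y -> Fr x y}.
Proof.
move=> x y; rewrite !inE => xl yl xy; rewrite /Frel xy /=.
have -> : (x < l.*2.-1)%N by lia.
have -> : (y < l.*2.-1)%N by lia.
by rewrite /=; lia.
Qed.

Definition lift_low (x : T) : T' := widen_ord (leq_pred _) x.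
Definition drop_low (x0 : T) (y : T') : T := insubd x0 (y : nat).

Lemma Frel_lift_low x y : Fr (lift_low x) (lift_low y) = Arel x y.
Proof. by rewrite /Frel /= !ltn_ord. Qed.

Lemma lift_lowK x0 : cancel lift_low (drop_low x0).
Proof. by move=> x; apply: val_inj; rewrite /drop_low val_insubd /= ltn_ord. Qed.

Variable w : T'.
Hypothesis hw : w = l.*2.-1 :> nat.

Lemma neq_top_ltn (y : T') : y != w -> (y < l.*2.-1)%N.
Proof. by move=> yw; have := ltn_ord y; have : y != w :> nat by []; rewrite hw; lia. Qed.

Lemma drop_lowK x0 y : y != w -> lift_low (drop_low x0 y) = y.
Proof.
by move=> /neq_top_ltn ylow; apply: val_inj; rewrite /= /drop_low val_insubd ylow.
Qed.

Lemma lift_low_neq_top x : lift_low x != w.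
Proof. by rewrite -val_eqE /= hw neq_ltn ltn_ord. Qed.

Hypothesis tl : (t < l)%N.

Lemma Frel_top y : Fr w y = (y < t)%N.
Proof. by rewrite /Frel hw ltnn /= eqxx -val_eqE /= hw; case: ltnP; lia. Qed.

Lemma Frel_near_top (z y : T') : (z < t)%N -> y != w -> Fr z y -> (y < t + l - 1)%N.
Proof.
move=> zt /neq_top_ltn ylow; rewrite /Frel ylow; have -> /= : (z < l.*2.-1)%N by lia.
by move=> /and3P[_ _]; lia.
Qed.

Variable v' : T'.
Hypothesis hv' : v' = l - 1 :> nat.

Section ApexCopies.
Variables (n : nat) (eF : rel 'I_n).
Hypotheses (sF : symmetric eF) (iF : irreflexive eF).

Definition apex_copies := copies_at eF Fr v' :&: covering w.

Let apex_nbrs := [set z : T' | z < t]%N.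

Lemma apex_nbrsE : [set z | Fr w z] = apex_nbrs.
Proof. by apply/setP=> z; rewrite !inE Frel_top. Qed.

Lemma fdeg_split (v : T) : v = l - 1 :> nat ->
  fdeg eF l t l = (zdeg eF l l + #|apex_copies|)%N.
Proof.
move=> hv; rewrite /fdeg /zdeg (big_pred1 v') => [|y]; last first.
  by rewrite /= -val_eqE /= hv' subn1.
rewrite (big_pred1 v) => [|x]; last by rewrite /= -val_eqE /= hv subn1.
rewrite (Fdeg_copies_at sF _ Frel_sym) (Fdeg_copies_at sF _ (@Arel_sym l)) /apex_copies.
have -> : v' = lift_low v by apply: val_inj; rewrite /= hv hv'.
apply: card_copies_at_split.
- exact: Frel_lift_low.
- exact: (lift_lowK v).
- exact: lift_low_neq_top.
- exact: drop_lowK.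
Qed.

Section Positive.
Variable x0 : 'I_n.
Hypotheses (deg_x0 : degree eF x0 = t) (tn : (t + 2 <= n)%N) (nl : (n < l)%N).
Let nbrs := [set y | eF x0 y].
Let non_nbrs := [set y | (y != x0) && ~~ eF x0 y].
Let top_slots := [set z : T' | l - #|non_nbrs| <= z < l]%N.

(* The non-neighbours of x0 fill the top of the clique {1, ..., l}, so vertex l is covered. *)
Definition apex_map : {ffun 'I_n -> T'} :=
  [ffun y => if y == x0 then w
             else if eF x0 y then relabel nbrs apex_nbrs w y
             else relabel non_nbrs top_slots w y].

Lemma card_nbrs : #|nbrs| = #|apex_nbrs|.
Proof. by rewrite card_ord_ltn; [exact: deg_x0 | lia]. Qed.

Lemma card_non_nbrs : #|non_nbrs| = (n - 1 - t)%N.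
Proof.
have -> : non_nbrs = ~: (x0 |: nbrs) by apply/setP=> y; rewrite !inE negb_or.
have := cardsC (x0 |: nbrs); rewrite cardsU1 card_ord inE iF /=.
by move: deg_x0; rewrite /degree => ->; lia.
Qed.

Lemma card_top_slots : #|top_slots| = #|non_nbrs|.
Proof.
have -> : top_slots = [set z : T' | z < l]%N :\: [set z : T' | z < l - #|non_nbrs|]%N.
  by apply/setP=> z; rewrite !inE -leqNgt andbC.
rewrite cardsDS; last by apply/subsetP=> z; rewrite !inE; lia.
by have := card_non_nbrs; rewrite !card_ord_ltn; lia.
Qed.

Lemma apex_map_image : apex_map @: setT = w |: (apex_nbrs :|: top_slots).
Proof.
have -> : [set: 'I_n] = x0 |: (nbrs :|: non_nbrs).
  by apply/setP=> y; rewrite !inE; case: eqVneq => //=; case: (eF x0 y).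
rewrite imsetU1 imsetU ffunE eqxx; congr (_ |: (_ :|: _)).
  rewrite -(relabel_image w card_nbrs); apply: eq_in_imset => y; rewrite inE ffunE => x0y.
  by rewrite x0y; case: eqVneq x0y => // ->; rewrite iF.
rewrite -(relabel_image w (esym card_top_slots)); apply: eq_in_imset => y.
by rewrite inE ffunE => /andP[/negbTE-> /negbTE->].
Qed.

Lemma apex_map_inj : injective apex_map.
Proof.
have w_slots : w \notin apex_nbrs :|: top_slots by rewrite !inE hw; lia.
have disj_slots : [disjoint apex_nbrs & top_slots].
  by rewrite disjoint_subset; apply/subsetP=> z; rewrite !inE card_non_nbrs; lia.
have /imset_injP f_inj : #|apex_map @: setT| == #|[set: 'I_n]|.
  by rewrite apex_map_image cardsU1 w_slots cardsU_disjoint // card_top_slots card_non_nbrs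
    card_ord_ltn ?cardsT ?card_ord; lia.
by move=> x y; apply: f_inj; rewrite inE.
Qed.

Lemma apex_map_embedding : embedding eF Fr apex_map.
Proof.
have apex_x0 : apex_map x0 = w by rewrite ffunE eqxx.
apply: (embedding_into_clique sF iF Frel_sym Frel_low_clique apex_map_inj (x0 := x0)).
  move=> x x0x; have : apex_map x \in w |: (apex_nbrs :|: top_slots).
    by rewrite -apex_map_image imset_f.
  have : apex_map x != w by rewrite -apex_x0 (inj_eq apex_map_inj).
  by rewrite !inE => /negbTE-> /=; lia.
move=> y x0y; have yx0 : y != x0 by apply: contraTneq x0y => ->; rewrite iF.
have : relabel nbrs apex_nbrs w y \in apex_nbrs.
  by apply: (relabel_mem _ card_nbrs); rewrite inE.
by rewrite apex_x0 Frel_top ffunE (negbTE yx0) x0y inE.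
Qed.

Lemma apex_copies_gt0 : (0 < #|apex_copies|)%N.
Proof.
apply/card_gt0P; exists (copy_of eF apex_map); rewrite !inE /= apex_map_image setU11 andbT.
apply/copies_atP; exists apex_map => //; split; first exact: apex_map_embedding.
by rewrite apex_map_image !inE hv' card_non_nbrs; apply/orP; right; apply/orP; right; lia.
Qed.

End Positive.

Section UpperBound.
Hypotheses (min_deg : is_min_degree eF t) (diam : diameter2 eF).
Hypotheses (t1 : (1 <= t)%N) (tn : (t + 2 <= n)%N).
Let core := w |: (v' |: apex_nbrs).
Let spare := (w |: [set z : T' | z < t + l - 1]%N) :\: core.

Lemma card_core : #|core| = (t + 2)%N.
Proof.
rewrite !cardsU1 card_ord_ltn; last lia.
by rewrite !inE -!val_eqE /= hv' hw; lia.
Qed.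

Lemma card_spare : #|spare| = (l - 2)%N.
Proof.
have core_sub : core \subset w |: [set z : T' | z < t + l - 1]%N.
  apply/subsetP=> z; rewrite !inE => /or3P[-> // | /eqP-> | zt]; apply/orP; right.
    by rewrite hv'; lia.
  by lia.
rewrite cardsDS // card_core cardsU1 card_ord_ltn; last by lia.
by rewrite inE hw; lia.
Qed.

(* The preimage of the apex has at least t neighbours, which must fill the t neighbours
   of the apex; by diameter 2 the whole image lies within distance 2 of the apex. *)
Lemma apex_embedding_image (f : {ffun 'I_n -> T'}) :
  embedding eF Fr f -> v' \in f @: setT -> w \in f @: setT ->
  core \subset f @: setT /\ f @: setT \subset core :|: spare.
Proof.
move=> ef v'f /imsetP[x _ fx].
have nbrs_img : apex_nbrs \subset f @: setT.
  have [_ /(_ x) degx] := min_deg.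
  have := embedding_neighbors ef (x := x); rewrite -fx apex_nbrsE; apply.
  by rewrite card_ord_ltn //; lia.
have img_ball : f @: setT \subset w |: [set z : T' | z < t + l - 1]%N.
  apply: subset_trans (embedding_image_ball2 ef x diam) _; rewrite -fx.
  apply/subsetP=> z; rewrite !inE; have [// | zw /=] := eqVneq z w.
  rewrite Frel_top => /orP[zt | /existsP[u /andP[]]]; first by lia.
  by rewrite Frel_top => ut /(Frel_near_top ut zw).
split; first by rewrite !subUset !sub1set v'f nbrs_img fx imset_f.
apply/subsetP=> z /(subsetP img_ball) zB; apply/setUP.
by have [zD | zD] := boolP (z \in core); [left | right; apply/setDP].
Qed.

Lemma card_apex_copies_le : (#|apex_copies| <= n`! * 'C(l - 2, n - t - 2))%N.
Proof.
pose candidates := [set f : {ffun 'I_n -> T'} |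
  [&& injectiveb f, core \subset f @: setT & f @: setT \subset core :|: spare]].
have sub_candidates :
    apex_copies \subset [set copy_of eF f | f : {ffun 'I_n -> T'} in candidates].
  apply/subsetP=> _ /setIP[/copies_atP[f [ef v'f] ->]]; rewrite inE /= => wf.
  have [core_img img_sub] := apex_embedding_image ef v'f wf.
  have /embeddingP[f_inj _] := ef.
  by apply/imsetP; exists f => //; rewrite inE core_img img_sub !andbT; apply/injectiveP.
apply: leq_trans (subset_leq_card sub_candidates) _.
apply: leq_trans (leq_imset_card _ _) _; rewrite -card_spare.
rewrite -[in n`!](card_ord n).
apply: card_inj_ffuns_between; last by rewrite card_core card_ord; lia.
by rewrite disjoint_sym disjoint_subset; apply/subsetP=> z /setDP[_ zD]; rewrite inE.
Qed.

End UpperBound.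
End ApexCopies.
End PathPowerWithApex.

Lemma diameter2_min_degree_bounds n (eF : rel 'I_n) t :
  irreflexive eF -> diameter2 eF -> is_min_degree eF t -> (1 <= t)%N /\ (t + 2 <= n)%N.
Proof.
move=> iF [[x [y [xy nxy]]] common] [[x0 deg_x0] min_deg]; split.
  rewrite -deg_x0; apply/card_gt0P.
  have [y0 x0y0] : exists y0, x0 != y0.
    by exists (if x0 == x then y else x); have [->|] := eqVneq x0 x.
  have [x0y0e | nx0y0] := boolP (eF x0 y0); first by exists y0; rewrite inE.
  by have [z /andP[x0z _]] := common x0 y0 x0y0 nx0y0; exists z; rewrite inE.
have sub : [set z | eF x z] \subset ~: [set x; y].
  apply/subsetP=> z; rewrite !inE negb_or => xz; apply/andP; split.
    by apply: contraTneq xz => ->; rewrite iF.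
  by apply: contraTneq xz => ->.
have := subset_leq_card sub; have := cardsC [set x; y]; have := min_deg x.
by rewrite /degree cards2 xy card_ord; lia.
Qed.

Lemma CbE (m k : nat) : (k <= m)%N -> Cb m k = 'C(m, k).
Proof. by move=> km; rewrite /Cb lez_nat km. Qed.

Unset Implicit Arguments.
Theorem lemma10 (n : nat) (eF : rel 'I_n) (t l : nat) :
  symmetric eF -> irreflexive eF ->
  diameter2 eF -> is_min_degree eF t ->
  (n < l)%N ->
  (n`! * Cb (l%:Z - 2) (n%:Z - t%:Z - 2) < Cb (l%:Z - 2) (n%:Z - 2))%N ->
  forall i : nat, (t + 1 <= i <= l - 1)%N ->
    ((0 < ddeg eF l t l)%R /\
     (ddeg eF l t l < (zdeg eF l i.+1)%:Z - (zdeg eF l i)%:Z)%R).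
Proof.
move=> sF iF diam min_deg nl binom_gap i hi.
have [t1 tn] := diameter2_min_degree_bounds iF diam min_deg.
have [[x [y [xy nxy]]] common] := diam.
have [u /andP[xu _]] := common x y xy nxy.
have [[x0 deg_x0] _] := min_deg.
have tl : (t < l)%N by lia.
have hv : (l - 1 < l.*2.-1)%N by lia.
have hv' : (l - 1 < l.*2)%N by lia.
have hw : (l.*2.-1 < l.*2)%N by lia.
pose v := Ordinal hv; pose v' := Ordinal hv'; pose w := Ordinal hw.
have apex_gt0 := apex_copies_gt0 (w := w) erefl tl (v' := v') erefl sF iF deg_x0 tn nl.
have apex_le := card_apex_copies_le (w := w) erefl tl (v' := v') erefl min_deg diam t1 tn.
have incr : (zdeg eF l i + 'C(l - 2, n - 2) <= zdeg eF l i.+1)%N.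
  by apply: zdeg_increment sF iF xu _; lia.
have -> : ddeg eF l t l = Posz #|apex_copies t w v' eF|.
  have := fdeg_split t (w := w) erefl (v' := v') erefl sF (v := v) erefl.
  by rewrite /ddeg => ->; rewrite PoszD addrC addKr.
move: binom_gap; have -> : (l%:Z - 2)%R = (l - 2)%N by lia.
have -> : (n%:Z - t%:Z - 2)%R = (n - t - 2)%N by lia.
have -> : (n%:Z - 2)%R = (n - 2)%N by lia.
by rewrite !CbE; lia.
Qed.
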